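(* Let $\mathcal M=\{M_{I,\bar J}\}$ be an $(n,d)$-matching ensemble and let $\{T_v\}$ be an extended $(n,d)$-tope arrangement such that every tope $T_v$ is compatible with every partial matching $M_{I,\bar J}$. For a lattice point $w$ of $(n+1)\Delta^{d-1}$, let $\overline{\mathrm{supp}}(w)=\{\bar j\in[\bar d]: w_{\bar j}\ge1\}$. Then $\bar{\mathbb T}(w):=\bigcup_{\bar j\in\overline{\mathrm{supp}}(w)}T_{w-e_{\bar j}}$ is a spanning tree on $[n]\sqcup\overline{\mathrm{supp}}(w)$ in which every vertex of $[n]$ has degree $1$ or $2$. Moreover, letting $\Omega(w)=\bigcap_{\bar j\in\overline{\mathrm{supp}}(w)}T_{w-e_{\bar j}}$, for each $\bar j\in\overline{\mathrm{supp}}(w)$ we have $T_{w-e_{\bar j}}=\Omega(w)\sqcup\bar{\mathbb T}(w)^{\leftarrow\bar j}$, where $\bar{\mathbb T}(w)^{\leftarrow\bar j}$ is the set of edges $(i,\bar k)$ of $\bar{\mathbb T}(w)$ such that, rooting the tree at $\bar j$, $i$ is the parent of $\bar k$.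
   Context: Fix positive integers $n,d$; graphs are subgraphs of the complete bipartite graph with left vertices $[n]$ and right vertices $[\bar d]=\{\bar1,\dots,\bar d\}$, identified with edge sets. $RD$ is the vector of right-vertex degrees; $e_{\bar j}$ a unit vector; lattice points of $k\Delta^{d-1}$ are vectors in $\mathbb Z_{\ge0}^{[\bar d]}$ with sum $k$. Two acyclic graphs are compatible if whenever both contain a perfect matching between the same $I\subseteq[n]$, $\bar J\subseteq[\bar d]$, these matchings coincide. A tope is a map $T:[n]\to[\bar d]$ (graph $\{(i,T(i))\}$). An extended $(n,d)$-tope arrangement is a collection of pairwise compatible topes $T_v$, one for each lattice point $v$ of $n\Delta^{d-1}$, with $RD(T_v)=v$. (For every matching ensemble an extended tope arrangement compatible with all its partial matchings exists; it is the one obtained by iterated amalgamation.) An $(n,d)$-matching ensemble is a collection of bijections $M_{I,\bar J}:I\to\bar J$ (viewed as matching graphs), one for each $I\subseteq[n]$, $\bar J\subseteq[\bar d]$ with $|I|=|\bar J|$, such that (Closure) if $I'\subseteq I$, $\bar J'\subseteq\bar J$ and $M_{I,\bar J}$ contains a perfect matching between $I'$ and $\bar J'$ then $M_{I',\bar J'}\subseteq M_{I,\bar J}$; (Left linkage) if $|I|=|\bar J|+1$, the union of $M_{I',\bar J}$ over $I'\subset I$ with $|I'|=|\bar J|$ is a spanning tree on $I\sqcup\bar J$ in which each vertex of $\bar J$ has degree 2; (Right linkage) if $|I|+1=|\bar J|$, the union of $M_{I,\bar J'}$ over $\bar J'\subset\bar J$ with $|\bar J'|=|I|$ is a spanning tree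 on $I\sqcup\bar J$ in which each vertex of $I$ has degree 2. *)

From mathcomp Require Import all_boot.
Set Implicit Arguments. Unset Strict Implicit. Unset Printing Implicit Defensive.

Section Graphs.
Variables n d : nat.

(* Subgraphs of K_{n,d}: left vertices 'I_n, right vertices 'I_d. *)
Definition graph := {set 'I_n * 'I_d}.
Definition vtx := ('I_n + 'I_d)%type.

Definition degL (G : graph) (i : 'I_n) : nat := #|[set e in G | e.1 == i]|.
Definition degR (G : graph) (j : 'I_d) : nat := #|[set e in G | e.2 == j]|.
Definition RD (G : graph) : {ffun 'I_d -> nat} := [ffun j => degR G j].

Definition adj (G : graph) : rel vtx := fun x y =>
  match x, y with
  | inl i, inr k => (i, k) \in G
  | inr k, inl i => (i, k) \in G
  | _, _ => false
  end.

Definition vset (I : {set 'I_n}) (J : {set 'I_d}) : {set vtx} :=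
  [set x : vtx | match x with inl i => i \in I | inr j => j \in J end].

Definition acyclic (G : graph) : Prop :=
  forall c : seq vtx, 3 <= size c -> ~ ucycle (adj G) c.

Definition spanning_tree (I : {set 'I_n}) (J : {set 'I_d}) (G : graph) : Prop :=
  [/\ G \subset setX I J,
      (forall x y, x \in vset I J -> y \in vset I J -> connect (adj G) x y)
    & acyclic G].

Definition perfect_matching (I : {set 'I_n}) (J : {set 'I_d}) (G : graph) : Prop :=
  [/\ G \subset setX I J,
      (forall i, i \in I -> degL G i = 1)
    & (forall j, j \in J -> degR G j = 1)].

Definition compatible (G H : graph) : Prop :=
  forall (I : {set 'I_n}) (J : {set 'I_d}) (MG MH : graph), MG \subset G -> MH \subset H ->
    perfect_matching I J MG -> perfect_matching I J MH -> MG = MH.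

Definition matching_ensemble
    (M : {set 'I_n} -> {set 'I_d} -> graph) : Prop :=
  [/\ (forall (I : {set 'I_n}) (J : {set 'I_d}), #|I| = #|J| -> perfect_matching I J (M I J)),
      (forall (I I' : {set 'I_n}) (J J' : {set 'I_d}), #|I| = #|J| -> #|I'| = #|J'| ->
         I' \subset I -> J' \subset J ->
         (exists G : graph, G \subset M I J /\ perfect_matching I' J' G) ->
         M I' J' \subset M I J),
      (forall (I : {set 'I_n}) (J : {set 'I_d}), #|I| = #|J| + 1 ->
         let U := \bigcup_(I' : {set 'I_n} | (I' \proper I) && (#|I'| == #|J|)) M I' J in
         spanning_tree I J U /\ (forall j, j \in J -> degR U j = 2))
    &
      (forall (I : {set 'I_n}) (J : {set 'I_d}), #|I| + 1 = #|J| ->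
         let U := \bigcup_(J' : {set 'I_d} | (J' \proper J) && (#|J'| == #|I|)) M I J' in
         spanning_tree I J U /\ (forall i, i \in I -> degL U i = 2))].

Definition tope_graph (T : {ffun 'I_n -> 'I_d}) : graph := [set (i, T i) | i : 'I_n].

(* lattice points of k Delta^{d-1} *)
Definition lattice_pt (k : nat) (v : {ffun 'I_d -> nat}) : Prop := \sum_j v j = k.

(* extended (n,d)-tope arrangement: T v given for each lattice point v of n Delta^{d-1} *)
Definition ext_tope_arrangement
    (T : {ffun 'I_d -> nat} -> {ffun 'I_n -> 'I_d}) : Prop :=
  (forall v, lattice_pt n v -> RD (tope_graph (T v)) = v) /\
  (forall v v', lattice_pt n v -> lattice_pt n v' ->
     compatible (tope_graph (T v)) (tope_graph (T v'))).

Definition suppbar (w : {ffun 'I_d -> nat}) : {set 'I_d} := [set j | 1 <= w j].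

Definition sub_unit (w : {ffun 'I_d -> nat}) (j : 'I_d) : {ffun 'I_d -> nat} :=
  [ffun k => w k - (k == j)].

(* u is the parent of v in G rooted at r: u is the vertex following v on a
   (simple) path from v to r *)
Definition parent_rooted (G : graph) (r u v : vtx) : Prop :=
  exists p : seq vtx, [/\ path (adj G) v (u :: p), uniq (v :: u :: p) & last u p = r].

Definition Tbar (T : {ffun 'I_d -> nat} -> {ffun 'I_n -> 'I_d})
    (w : {ffun 'I_d -> nat}) : graph :=
  \bigcup_(j in suppbar w) tope_graph (T (sub_unit w j)).

Definition Omega (T : {ffun 'I_d -> nat} -> {ffun 'I_n -> 'I_d})
    (w : {ffun 'I_d -> nat}) : graph :=
  \bigcap_(j in suppbar w) tope_graph (T (sub_unit w j)).

Definition toward_root (G : graph) (j : 'I_d) (e : 'I_n * 'I_d) : Prop :=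
  e \in G /\ parent_rooted G (inr j) (inl e.1) (inr e.2).

End Graphs.

(* Write T_x for T (w - e_x), x in supp(w).  An exchange argument shows that if
   T_y sends i to y then so does every compatible T_x: otherwise the fibre counts
   force a cycle on which T_y and T_x give two different perfect matchings of the
   same vertex sets.  Hence at each left vertex either all the T_x agree (these
   edges form Omega(w)), or no T_x sends it to its own index.  On the set I of the
   latter vertices each T_x is a perfect matching of I with supp(w) minus x, hence
   equals M_{I, supp(w) - x} by compatibility; right linkage makes the union of
   these a spanning tree on I + supp(w) with all left degrees 2, and Omega(w) hangs
   the other left vertices on it as leaves.  Since T_j matches I with the right
   vertices other than j, its edges at I are exactly those pointing to the root j. *)

From mathcomp Require Import all_boot.
From mathcomp Require Import zify.
Set Implicit Arguments. Unset Strict Implicit. Unset Printing Implicit Defensive.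

Lemma lattice_pt_sub_unit d k (w : {ffun 'I_d -> nat}) j :
  lattice_pt k.+1 w -> j \in suppbar w -> lattice_pt k (sub_unit w j).
Proof.
rewrite /lattice_pt inE => sum_w wj; rewrite (bigD1 j) //= ffunE eqxx.
rewrite (eq_bigr w) => [|z /negbTE zj]; last by rewrite ffunE zj subn0.
by move: sum_w; rewrite (bigD1 j) //=; lia.
Qed.

Section Topes.
Variables n d : nat.
Implicit Types (T : {ffun 'I_n -> 'I_d}) (I : {set 'I_n}) (J : {set 'I_d}).

Lemma mem_tope_graph T e : (e \in tope_graph T) = (T e.1 == e.2).
Proof.
case: e => i k /=; apply/imsetP/eqP => [[i' _ [-> ->]] //|<-]; by exists i.
Qed.

Lemma card_tope_graph_filter T (P : pred ('I_n * 'I_d)) :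
  #|[set e in tope_graph T | P e]| = #|[set i | P (i, T i)]|.
Proof.
have -> : [set e in tope_graph T | P e] = [set (i, T i) | i in [set i | P (i, T i)]].
  apply/setP => -[i k]; rewrite !inE mem_tope_graph /=.
  apply/andP/imsetP => [[/eqP <- Pik]|[i' Pi' [-> ->]]]; first by exists i; rewrite ?inE.
  by rewrite inE in Pi'.
by rewrite card_imset // => i i' [].
Qed.

Lemma degR_tope_graph T z : degR (tope_graph T) z = #|[set i | T i == z]|.
Proof. exact: card_tope_graph_filter. Qed.

Lemma card_tope_fiber T v z :
  RD (tope_graph T) = v -> #|[set i | T i == z]| = v z.
Proof. by move=> <-; rewrite ffunE degR_tope_graph. Qed.

Definition tope_restrict T I : graph n d := [set e in tope_graph T | e.1 \in I].

Lemma mem_tope_restrict T I i k :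
  ((i, k) \in tope_restrict T I) = (T i == k) && (i \in I).
Proof. by rewrite inE mem_tope_graph. Qed.

Lemma degL_tope_restrict T I i : degL (tope_restrict T I) i = (i \in I).
Proof.
rewrite /degL (eq_card (B := [set e in tope_graph T | (e.1 \in I) && (e.1 == i)])).
  2: by move=> e; rewrite !inE andbA.
rewrite card_tope_graph_filter /=; case: (boolP (i \in I)) => Ii /=.
  by apply: (@eq_card1 _ i) => i'; rewrite !inE andbC; case: (i' =P i) => [->|].
apply: eq_card0 => i'; rewrite !inE andbC.
by case: (i' =P i) => [->|]; rewrite ?(negbTE Ii).
Qed.

Lemma degR_tope_restrict T I z :
  degR (tope_restrict T I) z = #|[set i in I | T i == z]|.
Proof.
rewrite /degR (eq_card (B := [set e in tope_graph T | (e.1 \in I) && (e.2 == z)])).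
  exact: card_tope_graph_filter.
by move=> e; rewrite !inE andbA.
Qed.

Lemma tope_restrict_perfect_matching T I J :
  {in I &, injective T} -> T @: I = J -> perfect_matching I J (tope_restrict T I).
Proof.
move=> injT imT; split.
- apply/subsetP => -[i k]; rewrite mem_tope_restrict => /andP[/eqP <- Ii].
  by rewrite !inE /= -imT imset_f ?Ii.
- by move=> i Ii; rewrite degL_tope_restrict Ii.
- move=> z; rewrite -imT => /imsetP[i Ii ->]; rewrite degR_tope_restrict.
  apply/eqP/cards1P; exists i; apply/setP => i'; rewrite !inE.
  apply/andP/eqP => [[Ii' /eqP]|->]; [exact: injT | by rewrite Ii eqxx].
Qed.

Lemma card_preimset_sum T J :
  #|[set i | T i \in J]| = \sum_(z in J) #|[set i | T i == z]|.
Proof.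
rewrite -sum1_card (partition_big T (mem J)) /=; last by move=> i; rewrite inE.
apply: eq_bigr => z Jz; rewrite -sum1_card; apply: eq_bigl => i; rewrite !inE.
by case: (T i =P z) => [->|]; rewrite ?Jz ?andbF.
Qed.

End Topes.

Section Adjacency.
Variables n d : nat.
Implicit Types G H : graph n d.

Lemma adj_sym G u v : adj G u v = adj G v u.
Proof. by case: u => [i|k]; case: v. Qed.

Lemma adj_inl G i v : adj G (inl i) v -> exists2 k, v = inr k & (i, k) \in G.
Proof. by case: v => // k Gik; exists k. Qed.

Lemma adj_inr G k v : adj G (inr k) v -> exists2 i, v = inl i & (i, k) \in G.
Proof. by case: v => // i Gik; exists i. Qed.

Lemma adj_subset G H : G \subset H -> subrel (adj G) (adj H).
Proof. by move=> /subsetP GH [i|k] [i'|k'] //= /GH. Qed.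

Lemma degL_eq2_mem G i a b c : degL G i = 2 ->
  (i, a) \in G -> (i, b) \in G -> (i, c) \in G -> a != b -> c = a \/ c = b.
Proof.
move=> /eqP/cards2P[e1 [e2 [_ G_i]]] Ga Gb Gc.
have mem_i k : (i, k) \in G -> (i, k) = e1 \/ (i, k) = e2.
  move=> Gk; have : (i, k) \in [set e1; e2] by rewrite -G_i !inE Gk eqxx.
  by rewrite !inE => /orP[/eqP ->|/eqP ->]; [left|right].
move/eqP=> ab; case: (mem_i _ Ga) (mem_i _ Gb) (mem_i _ Gc) => [] ? [] ? [] ?;
  first [left; congruence | right; congruence | exfalso; congruence].
Qed.
End Adjacency.

Section Exchange.
Variables n d : nat.
Variables T T' : {ffun 'I_n -> 'I_d}.

Definition exchange : rel 'I_d :=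
  [rel z z' | (z != z') && [exists i, (T i == z) && (T' i == z')]].

Lemma exchange_cycle_nil c :
  compatible (tope_graph T) (tope_graph T') -> uniq c -> cycle exchange c -> c = [::].
Proof.
move=> compTT' uc cyc; case: c => [//|z0 c'] in uc cyc *; set c := z0 :: c' in uc cyc *.
have c_z0 : z0 \in c by rewrite mem_head.
have /andP[_ /existsP[i0 _]] := next_cycle cyc c_z0.
pose g z := odflt i0 [pick i | (T i == z) && (T' i == next c z)].
have gP z : z \in c -> [/\ T (g z) = z, T' (g z) = next c z & z != next c z].
  move=> cz; have /andP[zz' /existsP[i Ti]] := next_cycle cyc cz.
  by rewrite /g; case: pickP => [i' /andP[/eqP -> /eqP ->] //|/(_ i)]; rewrite Ti.
(* On I := g(c), both T and T' are perfect matchings onto c, differing at g z0. *)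
pose C := [set z | z \in c]; pose I := g @: C.
have matchT : perfect_matching I C (tope_restrict T I).
  apply: tope_restrict_perfect_matching.
    by move=> _ _ /imsetP[z cz ->] /imsetP[z' cz' ->]; rewrite !inE in cz cz';
      have [-> _ _] := gP z cz; have [-> _ _] := gP z' cz' => ->.
  rewrite -imset_comp -[RHS]imset_id; apply: eq_in_imset => z; rewrite inE => cz.
  by have [] := gP z cz.
have matchT' : perfect_matching I C (tope_restrict T' I).
  apply: tope_restrict_perfect_matching.
    move=> _ _ /imsetP[z cz ->] /imsetP[z' cz' ->]; rewrite !inE in cz cz'.
    have [_ -> _] := gP z cz; have [_ -> _] := gP z' cz' => /(congr1 (prev c)).
    by rewrite !prev_next // => ->.
  rewrite -imset_comp -[RHS]imset_id.
  apply/setP => z; apply/imsetP/imsetP => [[z' cz' ->]|[z' cz ->]].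
    rewrite inE in cz'; have [_ T'g _] := gP z' cz'.
    by exists (next c z'); rewrite ?in_set ?mem_next //= T'g.
  rewrite inE in cz; exists (prev c z'); first by rewrite in_set mem_prev.
  have [_ T'g _] := gP _ (etrans (mem_prev c z') cz).
  by rewrite -[RHS]/(T' (g (prev c z'))) T'g next_prev.
have sameTT' : tope_restrict T I = tope_restrict T' I.
  by apply: compTT' matchT matchT'; apply/subsetP => e; rewrite inE => /andP[].
have [Tg0 T'g0 z0_next] := gP z0 c_z0.
have : (g z0, z0) \in tope_restrict T' I.
  by rewrite -sameTT' mem_tope_restrict Tg0 eqxx imset_f ?inE.
by rewrite mem_tope_restrict T'g0 eq_sym (negbTE z0_next).
Qed.

Variables (w : {ffun 'I_d -> nat}) (y j : 'I_d).
Hypothesis fiberT : forall z, #|[set i | T i == z]| = w z - (z == y).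
Hypothesis fiberT' : forall z, #|[set i | T' i == z]| = w z - (z == j).

(* Otherwise T' would send strictly more left vertices than T into the set of
   exchange-successors of T' i0, contradicting the fibre counts. *)
Lemma exchange_connect_back i0 : T i0 = y -> connect exchange (T' i0) y.
Proof.
move=> Ti0; apply/negPn/negP => no_y.
pose X := [set z | connect exchange (T' i0) z].
have X_y : y \notin X by rewrite inE.
have : [set i | T i \in X] \proper [set i | T' i \in X].
  apply/properP; split; last by exists i0; rewrite !inE ?connect0 // Ti0.
  apply/subsetP => i; rewrite !inE => Xi; apply: connect_trans Xi _.
  case: (eqVneq (T i) (T' i)) => [<- //|TT']; apply: connect1.
  by rewrite /exchange /= TT'; apply/existsP; exists i; rewrite !eqxx.
move/proper_card; rewrite !card_preimset_sum; apply/negP; rewrite -leqNgt.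
apply: leq_sum => z Xz; rewrite fiberT fiberT'.
have -> : (z == y) = false by apply: contraNF X_y => /eqP <-.
by rewrite subn0 leq_subr.
Qed.

Lemma compatible_tope_keeps_deficit i0 :
  compatible (tope_graph T) (tope_graph T') -> T i0 = y -> T' i0 = y.
Proof.
move=> compTT' Ti0; apply/eqP; apply/negPn/negP => T'i0.
have y_z0 : exchange y (T' i0).
  by rewrite /exchange /= eq_sym T'i0; apply/existsP; exists i0; rewrite Ti0 !eqxx.
case/connectP: (exchange_connect_back Ti0) => p p_path p_last.
case/shortenP: p_path p_last => q q_path q_uniq _ q_last.
have cyc : cycle exchange (T' i0 :: q) by rewrite /cycle rcons_path q_path -q_last.
by have := exchange_cycle_nil compTT' q_uniq cyc.
Qed.

End Exchange.

Section UnionOfTopes.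
Variables n d : nat.
Variable M : {set 'I_n} -> {set 'I_d} -> graph n d.
Variable w : {ffun 'I_d -> nat}.
Variable F : 'I_d -> {ffun 'I_n -> 'I_d}.
Local Notation S := (suppbar w).

Hypothesis ensM : matching_ensemble M.
Hypothesis sum_w : \sum_j w j = n.+1.
Hypothesis fiberF :
  forall x, x \in S -> forall z, #|[set i | F x i == z]| = w z - (z == x).
Hypothesis compatF : forall x y, x \in S -> y \in S ->
  compatible (tope_graph (F x)) (tope_graph (F y)).
Hypothesis compatFM : forall x, x \in S -> forall (I : {set 'I_n}) (J : {set 'I_d}),
  #|I| = #|J| -> compatible (tope_graph (F x)) (M I J).

Lemma supp_nonempty : exists x0, x0 \in S.
Proof.
apply/existsP; apply: contraT => /existsPn S0.
have : \sum_j w j = 0.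
  by apply: big1 => z _; move: (S0 z); rewrite inE -ltnNge ltnS leqn0 => /eqP.
by rewrite sum_w.
Qed.

Lemma tope_in_supp x i : x \in S -> F x i \in S.
Proof.
move=> Sx; have : 0 < #|[set i' | F x i' == F x i]|.
  by apply/card_gt0P; exists i; rewrite inE.
by rewrite fiberF // inE => /leq_trans; apply; exact: leq_subr.
Qed.

(* Idis is the left vertex set of the linkage tree; Omega(w) consists of the
   edges at the other left vertices. *)
Definition agree i := [forall x in S, forall x' in S, F x i == F x' i].
Definition Idis := [set i | ~~ agree i].

Lemma agreeP i : reflect (forall x x', x \in S -> x' \in S -> F x i = F x' i) (agree i).
Proof.
apply: (iffP forallP) => [all_eq x x' Sx Sx'|all_eq x].
  by have /implyP/(_ Sx)/forallP/(_ x')/implyP/(_ Sx')/eqP := all_eq x.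
by apply/implyP => Sx; apply/forallP => x'; apply/implyP => Sx'; rewrite (all_eq x x').
Qed.

Lemma tope_not_self x i : x \in S -> i \in Idis -> F x i != x.
Proof.
move=> Sx; rewrite inE => /agreeP dis; apply/eqP => Fxi; apply: dis => a b Sa Sb.
have keep z : z \in S -> F z i = x.
  move=> Sz; apply: (compatible_tope_keeps_deficit (fiberF Sx) (fiberF Sz)) Fxi.
  exact: compatF.
by rewrite !keep.
Qed.

Lemma card_fiber_split x z : #|[set i | F x i == z]| =
  #|[set i in Idis | F x i == z]| + #|[set i in ~: Idis | F x i == z]|.
Proof.
rewrite -(cardsID Idis [set i | F x i == z]); congr (_ + _); apply: eq_card => i;
  by rewrite !inE andbC.
Qed.

Lemma card_fiber_agree x x' z : x \in S -> x' \in S ->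
  #|[set i in ~: Idis | F x i == z]| = #|[set i in ~: Idis | F x' i == z]|.
Proof.
move=> Sx Sx'; apply: eq_card => i; rewrite !inE negbK.
by case: (boolP (agree i)) => // /agreeP agr; rewrite (agr x x').
Qed.

Lemma card_fiber_Idis x z : x \in S -> #|[set i in Idis | F x i == z]| = (z \in S :\ x).
Proof.
move=> Sx; rewrite in_setD1; case: (boolP (z \in S)) => Sz; last first.
  rewrite andbF; apply/eqP; rewrite cards_eq0 -subset0; apply/subsetP => i.
  by rewrite inE => /andP[_ /eqP Fxi]; move: (tope_in_supp i Sx); rewrite Fxi (negbTE Sz).
have own : #|[set i in Idis | F z i == z]| = 0.
  apply/eqP; rewrite cards_eq0 -subset0; apply/subsetP => i.
  by rewrite inE => /andP[Ii /eqP Fzi]; move: (tope_not_self Sz Ii); rewrite Fzi eqxx.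
have agree_z : #|[set i in ~: Idis | F x i == z]| = w z - 1.
  move: (fiberF Sz z); rewrite eqxx card_fiber_split own add0n => <-.
  exact: card_fiber_agree.
have := Sz; rewrite inE => wz_pos.
move: (fiberF Sx z); rewrite card_fiber_split agree_z andbT.
by case: (z =P x) => _ /=; lia.
Qed.

Lemma tope_inj_Idis x : x \in S -> {in Idis &, injective (F x)}.
Proof.
move=> Sx i i' Ii Ii' Fii'; have := card_fiber_Idis (F x i) Sx.
rewrite in_setD1 tope_not_self // tope_in_supp // => /eqP/cards1P[a fib].
have mem_a i0 : (i0 \in [set a]) = (i0 \in Idis) && (F x i0 == F x i) by rewrite -fib inE.
by move: (mem_a i) (mem_a i'); rewrite Ii Ii' Fii' eqxx !inE => /eqP -> /eqP ->.
Qed.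

Lemma tope_image_Idis x : x \in S -> F x @: Idis = S :\ x.
Proof.
move=> Sx; apply/setP => z; apply/imsetP/idP => [[i Ii ->]|Sxz].
  by rewrite in_setD1 tope_not_self // tope_in_supp.
have := card_fiber_Idis z Sx; rewrite Sxz => /eqP/cards1P[i fib].
have : i \in [set i0 in Idis | F x i0 == z] by rewrite fib set11.
by rewrite inE => /andP[Ii /eqP <-]; exists i.
Qed.

Lemma card_Idis x : x \in S -> #|Idis| = #|S :\ x|.
Proof.
by move=> Sx; rewrite -(tope_image_Idis Sx) card_in_imset //; exact: tope_inj_Idis.
Qed.

Lemma card_Idis_succ : #|Idis| + 1 = #|S|.
Proof.
by have [x0 Sx0] := supp_nonempty; rewrite (card_Idis Sx0) (cardsD1 x0 S) Sx0 addnC.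
Qed.

Lemma ensemble_tope_restrict x : x \in S -> M Idis (S :\ x) = tope_restrict (F x) Idis.
Proof.
move=> Sx; have cardI := card_Idis Sx; case: ensM => pmM _ _ _.
have pmF := tope_restrict_perfect_matching (tope_inj_Idis Sx) (tope_image_Idis Sx).
symmetry; apply: (compatFM Sx cardI) pmF (pmM _ _ cardI) => //.
by apply/subsetP => e; rewrite inE => /andP[].
Qed.

Definition linkage : graph n d :=
  \bigcup_(J : {set 'I_d} | (J \proper S) && (#|J| == #|Idis|)) M Idis J.

Lemma mem_linkage e :
  reflect (exists2 x, x \in S & e \in tope_restrict (F x) Idis) (e \in linkage).
Proof.
apply: (iffP bigcupP) => [[J /andP[ltJS /eqP cardJ] Je]|[x Sx Fxe]].
  have [x Sx Jx] : exists2 x, x \in S & x \notin J.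
    by case/properP: ltJS => _ [x Sx Jx]; exists x.
  have defJ : J = S :\ x.
    apply/eqP; rewrite eqEcard cardJ (card_Idis Sx) leqnn andbT.
    apply/subsetP => z Jz; rewrite in_setD1 (subsetP (proper_sub ltJS)) // andbT.
    by apply: contraNneq Jx => <-.
  by exists x => //; rewrite -(ensemble_tope_restrict Sx) -defJ.
exists (S :\ x); last by rewrite ensemble_tope_restrict.
by rewrite properD1 // (card_Idis Sx) eqxx.
Qed.

Lemma linkage_tree :
  spanning_tree Idis S linkage /\ (forall i, i \in Idis -> degL linkage i = 2).
Proof. by case: ensM => _ _ _ /(_ Idis S card_Idis_succ). Qed.

Definition Tunion : graph n d := \bigcup_(x in S) tope_graph (F x).
Definition Tmeet : graph n d := \bigcap_(x in S) tope_graph (F x).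

Lemma mem_Tunion e : reflect (exists2 x, x \in S & F x e.1 = e.2) (e \in Tunion).
Proof.
apply: (iffP bigcupP) => [[x Sx]|[x Sx Fxe]].
  by rewrite mem_tope_graph => /eqP; exists x.
by exists x => //; rewrite mem_tope_graph Fxe.
Qed.

Lemma tope_sub_Tunion x i : x \in S -> (i, F x i) \in Tunion.
Proof. by move=> Sx; apply/mem_Tunion; exists x. Qed.

Lemma Tunion_Idis i k : i \in Idis -> ((i, k) \in Tunion) = ((i, k) \in linkage).
Proof.
move=> Ii; apply/mem_Tunion/mem_linkage => [[x Sx /= Fxi]|[x Sx]].
  by exists x; rewrite // mem_tope_restrict Fxi eqxx.
by rewrite mem_tope_restrict => /andP[/eqP Fxi _]; exists x.
Qed.

Lemma Tunion_agree i k x : i \notin Idis -> x \in S -> (i, k) \in Tunion -> k = F x i.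
Proof. by rewrite inE negbK => /agreeP agr Sx /mem_Tunion[x' Sx' /= <-]; exact: agr. Qed.

Lemma adj_Tunion_agree i v x :
  i \notin Idis -> x \in S -> adj Tunion (inl i) v -> v = inr (F x i).
Proof. by move=> Ii Sx /adj_inl[k -> Tik]; rewrite (Tunion_agree Ii Sx Tik). Qed.

Lemma linkage_sub_Tunion : linkage \subset Tunion.
Proof.
apply/subsetP => -[i k] /mem_linkage[x Sx]; rewrite mem_tope_restrict => /andP[/eqP <- _].
exact: tope_sub_Tunion.
Qed.

Lemma Tunion_sub : Tunion \subset setX setT S.
Proof.
by apply/subsetP => -[i k] /mem_Tunion[x Sx /= <-]; rewrite in_setX in_setT tope_in_supp.
Qed.

(* Vertices outside Idis are leaves attached to the linkage tree. *)
Lemma Tunion_connect u v :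
  u \in vset setT S -> v \in vset setT S -> connect (adj Tunion) u v.
Proof.
have [x0 Sx0] := supp_nonempty.
have [[_ conn_linkage _] _] := linkage_tree.
have to_linkage u' : u' \in vset setT S -> exists2 u'', u'' \in vset Idis S &
    connect (adj Tunion) u' u'' /\ connect (adj Tunion) u'' u'.
  case: u' => [i|k] Su'; last by exists (inr k); [move: Su'; rewrite !inE | split].
  case: (boolP (i \in Idis)) => Ii; first by exists (inl i); [rewrite inE | split].
  exists (inr (F x0 i)); first by rewrite inE tope_in_supp.
  by split; apply: connect1; rewrite /= tope_sub_Tunion.
move=> /to_linkage[u' Su' [uu' _]] /to_linkage[v' Sv' [_ v'v]].
apply: connect_trans uu' (connect_trans _ v'v).
apply: connect_sub (conn_linkage _ _ Su' Sv') => a b /(adj_subset linkage_sub_Tunion).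
exact: connect1.
Qed.

(* An agreeing left vertex has a single neighbour, so it cannot lie on a cycle. *)
Lemma cycle_Tunion_Idis c i :
  ucycle (adj Tunion) c -> 3 <= size c -> inl i \in c -> i \in Idis.
Proof.
have [x0 Sx0] := supp_nonempty.
move=> ucyc size_c c_i; case: (rot_to c_i) => r p rot_c.
move: ucyc size_c; rewrite -(rot_ucycle r) -(size_rot r) rot_c => /andP[cyc uniq_c].
clear rot_c; case: p cyc uniq_c => [|a [|b q]] // cyc uniq_c _; apply: contraT => Ii.
move: cyc; rewrite /cycle rcons_path /= => /andP[/andP[ia _] last_i].
rewrite adj_sym in last_i.
move: uniq_c => /= /andP[_ /andP[]]; rewrite (adj_Tunion_agree Ii Sx0 ia).
by rewrite -(adj_Tunion_agree Ii Sx0 last_i) mem_last.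
Qed.

Lemma Tunion_acyclic : acyclic Tunion.
Proof.
move=> c size_c ucyc; have [[_ _ acyc_linkage] _] := linkage_tree.
apply: (acyc_linkage c size_c); have /andP[cyc uniq_c] := ucyc.
rewrite /ucycle uniq_c andbT.
apply: (sub_in_cycle (P := mem c)) cyc; last exact/allP.
move=> [i|k] [i'|k'] //= ci ck; rewrite Tunion_Idis //; exact: (cycle_Tunion_Idis ucyc).
Qed.

Lemma degL_Tunion_Idis i : i \in Idis -> degL Tunion i = 2.
Proof.
move=> Ii; have [_ /(_ i Ii) <-] := linkage_tree; apply: eq_card => -[i' k].
by rewrite !inE /=; case: (i' =P i) => [->|]; rewrite ?andbT ?andbF // Tunion_Idis.
Qed.

Lemma degL_Tunion_agree i : i \notin Idis -> degL Tunion i = 1.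
Proof.
have [x0 Sx0] := supp_nonempty.
move=> Ii; rewrite /degL -(cards1 (i, F x0 i)); apply: eq_card => -[i' k].
rewrite !inE /= xpair_eqE; case: (i' =P i) => [->|]; rewrite ?andbT ?andbF //=.
by apply/idP/eqP => [/(Tunion_agree Ii Sx0)|->]; last exact: tope_sub_Tunion.
Qed.

(* F j matches Idis with the right vertices other than the root j, so along a
   simple path to j each edge of F j at a left vertex points away from j. *)
Lemma rooted_path_tope j p k i : j \in S ->
  path (adj Tunion) (inr k) (inl i :: p) -> uniq (inr k :: inl i :: p) ->
  last (inl i) p = inr j -> F j i = k /\ i \in Idis.
Proof.
have [x0 Sx0] := supp_nonempty.
move=> Sj; have [m size_p] := ubnP (size p); elim: m => // m IHm in p k i size_p *.
case: p size_p => [|v p] //= size_p /and3P[ki iv p_path] uniq_p last_p.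
have [k1 v_k1 ik1] := adj_inl iv; subst v.
move: uniq_p => /= /andP[k_new /andP[i_new uniq_p]].
have kk1 : k != k1 by apply: contraNneq k_new => ->; rewrite !inE eqxx orbT.
have Ii : i \in Idis.
  apply: contraT => Ii; move: kk1.
  by rewrite (Tunion_agree Ii Sx0 ki) (Tunion_agree Ii Sx0 ik1) eqxx.
have [-> //|Fj_k1] := degL_eq2_mem (degL_Tunion_Idis Ii) ki ik1 (tope_sub_Tunion i Sj) kk1.
exfalso; clear k_new.
case: p size_p p_path uniq_p last_p i_new => [|v' p] size_p p_path uniq_p last_p i_new.
  by case: last_p => k1j; move: (tope_not_self Sj Ii); rewrite Fj_k1 k1j eqxx.
move: p_path => /= /andP[k1v' p_path].
have [i' v'_i' i'k1] := adj_inr k1v'; subst v'.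
have [Fj_i' Ii'] := IHm p k1 i' (ltnW size_p) (introT andP (conj k1v' p_path)) uniq_p last_p.
have ii' := tope_inj_Idis Sj Ii Ii' (etrans Fj_k1 (esym Fj_i')).
by move: i_new; rewrite ii' !inE eqxx orbT.
Qed.

Lemma toward_root_tope j e :
  j \in S -> toward_root Tunion j e -> F j e.1 = e.2 /\ e.1 \in Idis.
Proof. by move=> Sj [_ [p [p_path uniq_p last_p]]]; exact: rooted_path_tope last_p. Qed.

Lemma tope_toward_root j i : j \in S -> i \in Idis -> toward_root Tunion j (i, F j i).
Proof.
move=> Sj Ii; split; first exact: tope_sub_Tunion.
have : connect (adj Tunion) (inl i) (inr j).
  by apply: Tunion_connect; rewrite inE /=; [rewrite inE | exact: Sj].
case/connectP => p p_path last_p; case/shortenP: p_path last_p => q q_path uniq_q _ last_q.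
set k := F j i.
have k_notin_q : inr k \notin q.
  apply/negP => q_k; case/splitPr: q_k q_path uniq_q last_q => q1 q2.
  rewrite cat_path last_cat /= => /andP[_ /andP[_ q2_path]] uniq_q last_q.
  case: q2 q2_path uniq_q last_q => [|v q3] q2_path uniq_q last_q.
    by case: last_q => kj; move: (tope_not_self Sj Ii); rewrite -/k kj eqxx.
  move: q2_path => /= /andP[kv q3_path]; have [i' v_i' i'k] := adj_inr kv; subst v.
  have uniq_q3 : uniq (inr k :: inl i' :: q3).
    by move: uniq_q => /andP[_]; rewrite cat_uniq => /and3P[_ _].
  have i'i : inl i' != inl i :> vtx n d.
    move: uniq_q => /= /andP[i_new _]; apply: contraNneq i_new => <-.
    by rewrite mem_cat !inE eqxx !orbT.
  have [Fj_i' Ii'] :=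
    rooted_path_tope Sj (introT andP (conj kv q3_path)) uniq_q3 (esym last_q).
  by move: i'i; rewrite (tope_inj_Idis Sj Ii' Ii Fj_i') eqxx.
exists q; split => //; first by rewrite /= q_path andbT tope_sub_Tunion.
by rewrite cons_uniq uniq_q andbT in_cons k_notin_q.
Qed.

Lemma mem_Tmeet j e : j \in S -> (e \in Tmeet) <-> (F j e.1 = e.2 /\ e.1 \notin Idis).
Proof.
move=> Sj; split.
  move/bigcapP => all_e; have Fe x : x \in S -> F x e.1 = e.2.
    by move=> Sx; apply/eqP; rewrite -mem_tope_graph all_e.
  split; first exact: Fe.
  by rewrite inE negbK; apply/agreeP => x x' Sx Sx'; rewrite !Fe.
case=> Fje; rewrite inE negbK => /agreeP agr; apply/bigcapP => x Sx.
by rewrite mem_tope_graph (agr x j Sx Sj) Fje.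
Qed.

Lemma Tunion_tree_decomposition :
    (spanning_tree setT S Tunion /\ (forall i : 'I_n, 1 <= degL Tunion i <= 2)) /\
    (forall j, j \in S ->
       (forall e, e \in tope_graph (F j) <-> (e \in Tmeet \/ toward_root Tunion j e)) /\
       (forall e, e \in Tmeet -> ~ toward_root Tunion j e)).
Proof.
split.
  split; first by split; [exact: Tunion_sub | exact: Tunion_connect | exact: Tunion_acyclic].
  move=> i; case: (boolP (i \in Idis)) => Ii.
    by rewrite degL_Tunion_Idis.
  by rewrite degL_Tunion_agree.
move=> j Sj; split=> [[i k]|e /(mem_Tmeet _ Sj)[_ /negP Ie] /(toward_root_tope Sj)[_ //]].
split; last first.
  by case=> [/(mem_Tmeet _ Sj)|/(toward_root_tope Sj)] [Fj _]; rewrite mem_tope_graph Fj.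
rewrite mem_tope_graph => /eqP /= <-.
case: (boolP (i \in Idis)) => Ii; [right; exact: tope_toward_root | left].
exact/(mem_Tmeet _ Sj).
Qed.

End UnionOfTopes.

Theorem mainTheorem9 (n d : nat) (hn : 0 < n) (hd : 0 < d)
  (M : {set 'I_n} -> {set 'I_d} -> graph n d)
  (T : {ffun 'I_d -> nat} -> {ffun 'I_n -> 'I_d}) :
  matching_ensemble M ->
  ext_tope_arrangement T ->
  (forall v (I : {set 'I_n}) (J : {set 'I_d}), lattice_pt n v -> #|I| = #|J| ->
     compatible (tope_graph (T v)) (M I J)) ->
  forall w : {ffun 'I_d -> nat}, lattice_pt n.+1 w ->
    (spanning_tree setT (suppbar w) (Tbar T w) /\
     (forall i : 'I_n, 1 <= degL (Tbar T w) i <= 2)) /\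
    (forall j, j \in suppbar w ->
       (forall e, e \in tope_graph (T (sub_unit w j)) <->
                  (e \in Omega T w \/ toward_root (Tbar T w) j e)) /\
       (forall e, e \in Omega T w -> ~ toward_root (Tbar T w) j e)).
Proof.
move=> ensM [RD_T compat_T] compat_TM w w_pt.
have pt x : x \in suppbar w -> lattice_pt n (sub_unit w x) := lattice_pt_sub_unit w_pt.
have fiber x : x \in suppbar w ->
    forall z, #|[set i | T (sub_unit w x) i == z]| = w z - (z == x).
  by move=> Sx z; rewrite (card_tope_fiber _ (RD_T _ (pt x Sx))) ffunE.
exact: (Tunion_tree_decomposition (F := fun x => T (sub_unit w x)) ensM w_pt fiber
  (fun x y Sx Sy => compat_T _ _ (pt x Sx) (pt y Sy))
  (fun x Sx I J => compat_TM _ I J (pt x Sx))).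
Qed.
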